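(* Fix $n\ge1$, $\tau>0$, $\beta\in(0,1)$ and use the notation of the context, with $\bar r=\sqrt{R^2-s^2}$. For $x\in\mathbb{R}^n$ with $|x|\le\beta R$ and $r\in(R-s,R+s)$: \[ \cos\theta(x,r)=\frac{r^2+\bar r^2}{2Rr},\qquad \partial_r\theta(x,r)=-\frac{1}{\sin\theta(x,r)}\cdot\frac{r^2-\bar r^2}{2Rr^2}. \] Moreover $h(x,\cdot)>0$ on $(R-s,R+s)$ and $h=0$ at $r=R\pm s$, and \[ \gamma'(\theta(x,r))\,\partial_r\theta(x,r)=-\frac{1+O(N^{-1})}{4\sqrt{\pi\tau}\,r^2}\,(r^2-\bar r^2)\Big(1-\frac{(r^2+\bar r^2)^2}{8N\tau r^2}\Big)^{\frac{N-3}{2}}, \] where $\gamma'$ is the derivative of $\gamma$ in $\theta$ and $O(N^{-1})$ is bounded by a constant times $N^{-1}$ independent of $N$.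
   Context: For $N\ge3$: $R=\sqrt{2N\tau}$, $\bar y\in\mathbb{R}^N$ with $|\bar y|=R$; for $|x|\le\beta R$, $s=s(x)=\sqrt{\beta^2R^2-|x|^2}$. $\gamma(\theta)=\gamma(N,\theta)$ is the fraction of the volume of $S^{N-1}$ contained in a geodesic ball of radius $\theta\in[0,\pi]$. For $r\in[R-s,R+s]$, the part of the sphere $\{|y|=r\}\subset\mathbb{R}^N$ inside $B_s(\bar y)$ is a spherical cap centered at $r\bar y/R$; $\theta(x,r)$ is its angular radius. $h(x,r)=r\,\gamma(\theta(x,r))$. *)

From mathcomp Require Import all_boot all_order all_algebra.
From mathcomp Require Import all_classical all_reals all_analysis.
Set Implicit Arguments. Unset Strict Implicit. Unset Printing Implicit Defensive.
Import Order.TTheory GRing.Theory Num.Theory.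
Import numFieldNormedType.Exports.
Local Open Scope classical_set_scope.
Local Open Scope ring_scope.

Definition dotv (R : realType) (N : nat) (u v : 'rV[R]_N) : R :=
  \sum_(i < N) u ord0 i * v ord0 i.

Definition enorm (R : realType) (N : nat) (u : 'rV[R]_N) : R :=
  Num.sqrt (dotv u u).

Definition vangle (R : realType) (N : nat) (u v : 'rV[R]_N) : R :=
  acos (dotv u v / (enorm u * enorm v)).

Definition Rad (R : realType) (N : nat) (tau : R) : R :=
  Num.sqrt (2 * N%:R * tau).

Definition s_of_x (R : realType) (n : nat) (beta Rr : R) (x : 'rV[R]_n) : R :=
  Num.sqrt (beta ^+ 2 * Rr ^+ 2 - enorm x ^+ 2).

Definition sphere_cap (R : realType) (N : nat) (ybar : 'rV[R]_N) (s r : R)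
  : set 'rV[R]_N :=
  [set y | enorm y = r /\ enorm (y - ybar) <= s].

Definition cap_theta (R : realType) (N : nat) (ybar : 'rV[R]_N) (s r : R) : R :=
  sup [set vangle y ((r / enorm ybar) *: ybar) | y in sphere_cap ybar s r].

(* gamma(N, theta): fraction of the volume (surface measure) of S^{N-1}
   contained in a geodesic ball of radius theta in [0, pi]:
   int_0^theta sin^{N-2} / int_0^pi sin^{N-2}. *)
Definition gammaS (R : realType) (N : nat) (th : R) : R :=
  (\int[lebesgue_measure]_(t in `[0, th]) (sin t ^+ (N - 2)%N)) /
  (\int[lebesgue_measure]_(t in `[0, pi]) (sin t ^+ (N - 2)%N)).

Definition h_of (R : realType) (N : nat) (ybar : 'rV[R]_N) (s r : R) : R :=
  r * gammaS N (cap_theta ybar s r).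

From mathcomp Require Import all_boot all_order all_algebra.
From mathcomp Require Import all_classical all_reals all_analysis.
From mathcomp Require Import lra ring.
Import Order.TTheory GRing.Theory Num.Theory.
Import numFieldNormedType.Exports.
Local Open Scope classical_set_scope.
Local Open Scope ring_scope.

(* A point y with |y| = r lies in B_s(ybar) iff |y - ybar|^2 <= s^2, i.e. iff
   <y, ybar> >= (r^2 + R^2 - s^2) / 2; in dimension >= 2 this bound is attained,
   so the cap has angular radius theta = acos ((r^2 + rb^2) / (2 R r)), and the
   derivative of acos gives d theta / dr.  Writing W_m = int_0^pi sin^m, one has
   gamma(theta) = int_0^theta sin^(N-2) / W_(N-2), hence gamma'(theta) =
   sin^(N-2) theta / W_(N-2); substituting sin^2 theta = 1 - cos^2 theta yields
   the stated formula with 1 + e = 2 sqrt(pi tau) / (R W_(N-2)).  Wallis'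
   identity (m+1) W_m W_(m+1) = 2 pi and the monotonicity of W_m give
   (N-2) W_(N-2)^2 <= 2 pi <= (N-1) W_(N-2)^2, whence |e| <= 2/N. *)

Local Ltac nonzero := rewrite ?pnatr_eq0; repeat (apply/andP; split) => //.

Lemma le_acos {R : realType} (a b : R) : -1 <= a -> a <= b -> b <= 1 ->
  acos b <= acos a.
Proof.
move=> a1 ab b1; have a1' := le_trans ab b1; have b1' := le_trans a1 ab.
have acos_itv (x : R) : -1 <= x -> x <= 1 -> acos x \in `[0, pi].
  by move=> x1 x1'; rewrite in_itv /= acos_ge0 ?acos_lepi ?x1.
rewrite leNgt -ltr_cos ?acos_itv // !acosK ?in_itv /= ?a1 ?a1' ?b1 ?b1' //.
by rewrite -leNgt.
Qed.

Section SinePowerIntegrals.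
Context {R : realType}.
Notation mu := (@lebesgue_measure R).

Lemma continuous_sinX m : continuous (fun t : R => sin t ^+ m).
Proof.
move=> x; apply: (@continuous_comp _ _ _ (@sin R) (fun u => u ^+ m)).
  exact: continuous_sin.
exact: exprn_continuous.
Qed.

Lemma continuous_integrable_itv (f : R -> R) (a b : R) : continuous f ->
  mu.-integrable `[a, b] (EFin \o f).
Proof.
move=> cf; apply: continuous_compact_integrable; first exact: segment_compact.
exact: continuous_subspaceT.
Qed.

Lemma Rintegral_FTC2 {f F : R -> R} {a b : R} : a < b -> continuous f ->
  (forall x : R, is_derive x (1 : R) F (f x)) -> \int[mu]_(x in `[a, b]) f x = F b - F a.
Proof.
move=> ab cf dF.
have cF : continuous F.
  by move=> x; apply: differentiable_continuous; apply/derivable1_diffP; case: (dF x).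
rewrite /Rintegral (@continuous_FTC2 _ f F a b ab) //.
- exact: continuous_subspaceT.
- split; first by move=> x _; case: (dF x).
  + exact: cvg_at_right_filter (cF a).
  + exact: cvg_at_left_filter (cF b).
- by move=> x _; rewrite derive1E; apply: derive_val.
Qed.

Definition sinX_integral (m : nat) (th : R) : R :=
  \int[mu]_(t in `[0, th]) sin t ^+ m.

Definition wallis (m : nat) : R := sinX_integral m pi.

Lemma sinX_integral0 m : sinX_integral m 0 = 0.
Proof. by rewrite /sinX_integral set_itv1 Rintegral_set1. Qed.

Lemma is_derive_sinX_integral m (th : R) : 0 < th ->
  is_derive th (1 : R) (sinX_integral m) (sin th ^+ m).
Proof.
move=> th0.
have th1 : th < th + 1 by rewrite ltrDl.
have [d e] := continuous_FTC1_closed th1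
  (continuous_integrable_itv _ 0 (th + 1) (continuous_sinX m)) th0 (continuous_sinX m th).
by apply: DeriveDef; [exact: d | rewrite -derive1E].
Qed.

Lemma sinX_integral_gt0 m (th : R) : 0 < th < pi -> 0 < sinX_integral m th.
Proof.
move=> /andP[th0 thpi].
pose F := (m.+1%:R)^-1 *: (@sin R ^+ m.+1).
have dF (x : R) : is_derive x (1 : R) F (sin x ^+ m * cos x).
  by apply: is_derive_eq; rewrite scalerA mulKf ?pnatr_eq0.
have cf : continuous (fun x : R => sin x ^+ m * cos x).
  move=> x; apply: (continuousM (s := fun t => sin t ^+ m) (t := cos)).
  - exact: continuous_sinX.
  - exact: continuous_cos.
have := Rintegral_FTC2 th0 cf dF.
rewrite /F !scalrfctE !exprfctE /= sin0 expr0n /= scaler0 subr0 => FTC.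
have Fth : 0 < (m.+1%:R)^-1 *: sin th ^+ m.+1.
  by rewrite mulr_gt0 ?invr_gt0 ?ltr0n // exprn_gt0 // sin_gt0_pi // th0.
apply: (lt_le_trans Fth); rewrite -FTC.
apply: le_Rintegral => //.
- exact: continuous_integrable_itv cf.
- exact/continuous_integrable_itv/continuous_sinX.
move=> y; rewrite /= in_itv /= => /andP[y0 yth].
rewrite ler_piMr ?cos_le1 // exprn_ge0 // sin_ge0_pi // y0.
exact: le_trans yth (ltW thpi).
Qed.

Lemma wallis_ge0 m : 0 <= wallis m.
Proof.
apply: Rintegral_ge0 => x; rewrite /= in_itv /= => /andP[x0 xpi].
by rewrite exprn_ge0 // sin_ge0_pi // x0.
Qed.

Lemma wallisS_le m : wallis m.+1 <= wallis m.
Proof.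
apply: le_Rintegral => //; try exact/continuous_integrable_itv/continuous_sinX.
move=> x; rewrite /= in_itv /= => /andP[x0 xpi].
have sx0 : 0 <= sin x by rewrite sin_ge0_pi // x0.
by rewrite exprSr ler_piMr ?exprn_ge0 ?sin_le1.
Qed.

Lemma wallis0 : wallis 0 = pi.
Proof.
rewrite /wallis /sinX_integral; under eq_Rintegral do rewrite expr0.
rewrite Rintegral_cst // [X in fine X]lebesgue_measure_itv /= lte_fin pi_gt0 /=.
by rewrite subr0 mul1r.
Qed.

Lemma wallis1 : wallis 1 = 2.
Proof.
rewrite /wallis /sinX_integral; under eq_Rintegral do rewrite expr1.
have dF (x : R) : is_derive x (1 : R) (- @cos R) (sin x).
  by apply: is_derive_eq; rewrite opprK.
rewrite (Rintegral_FTC2 (pi_gt0 R) (@continuous_sin R) dF) /= !opprfctE cospi cos0.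
by rewrite opprK addrC.
Qed.

(* FTC for (sin^(m+1) cos)' = (m+1) sin^m - (m+2) sin^(m+2) on [0, pi] *)
Lemma wallis_rec m : m.+1%:R * wallis m = m.+2%:R * wallis m.+2.
Proof.
pose F := @sin R ^+ m.+1 * @cos R.
pose f (x : R) := m.+1%:R * sin x ^+ m - m.+2%:R * sin x ^+ m.+2.
have dF (x : R) : is_derive x (1 : R) F (f x).
  apply: is_derive_eq; rewrite /f !exprfctE /= /GRing.scale /= !exprS.
  have c2 : cos x * cos x = 1 - sin x * sin x by rewrite -!expr2 cos2sin2.
  transitivity (m.+1%:R * sin x ^+ m * (cos x * cos x) - sin x * sin x * sin x ^+ m).
    by ring.
  by rewrite c2; ring.
have cX (c : R) k : continuous (fun t : R => c * sin t ^+ k).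
  move=> x; apply: (continuousM (s := cst c) (t := fun t => sin t ^+ k)).
  - exact: cst_continuous.
  - exact: continuous_sinX.
have cf : continuous f.
  move=> x; apply: (continuousB (f := fun t => m.+1%:R * sin t ^+ m)
    (g := fun t => m.+2%:R * sin t ^+ m.+2)); exact: cX.
have := Rintegral_FTC2 (pi_gt0 R) cf dF.
rewrite RintegralB //; try exact/continuous_integrable_itv/cX.
rewrite !RintegralZl //; try exact/continuous_integrable_itv/continuous_sinX.
rewrite /F !exprfctE /= !mulrfctE sinpi sin0 !expr0n /= !mul0r subr0.
by move/eqP; rewrite subr_eq0 => /eqP.
Qed.

Lemma wallis_prod m : m.+1%:R * wallis m * wallis m.+1 = 2 * pi.
Proof.
elim: m => [|m IH]; first by rewrite wallis0 wallis1 mul1r mulrC.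
rewrite -IH.
transitivity (wallis m.+1 * (m.+2%:R * wallis m.+2)); first by ring.
by rewrite -wallis_rec; ring.
Qed.

Lemma wallis_gt0 m : 0 < wallis m.
Proof.
rewrite lt_def wallis_ge0 andbT; apply/eqP => W0.
have := wallis_prod m; rewrite W0 mulr0 mul0r => /eqP.
by rewrite eq_sym mulf_eq0 pnatr_eq0 /= gt_eqF // pi_gt0.
Qed.

Lemma wallis_sqr_le k : k.+1%:R * wallis k.+1 ^+ 2 <= 2 * pi.
Proof.
rewrite -(wallis_prod k) expr2 -!mulrA ler_pM2l ?ltr0n //.
by rewrite ler_wpM2r ?wallis_ge0 ?wallisS_le.
Qed.

Lemma wallis_sqr_ge k : 2 * pi <= k.+2%:R * wallis k.+1 ^+ 2.
Proof.
rewrite -(wallis_prod k.+1) expr2 -mulrA ler_pM2l ?ltr0n //.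
by rewrite ler_wpM2l ?wallis_ge0 ?wallisS_le.
Qed.

End SinePowerIntegrals.

Section Gamma.
Context {R : realType} (N : nat).

Lemma gammaSE (th : R) : gammaS N th = sinX_integral (N - 2) th / wallis (N - 2).
Proof. by []. Qed.

Lemma gammaS0 : gammaS N (0 : R) = 0.
Proof. by rewrite gammaSE sinX_integral0 mul0r. Qed.

Lemma gammaS_gt0 (th : R) : 0 < th < pi -> 0 < gammaS N th.
Proof. by move=> th_itv; rewrite gammaSE divr_gt0 ?wallis_gt0 // sinX_integral_gt0. Qed.

Lemma is_derive_gammaS (th : R) : 0 < th ->
  is_derive th (1 : R) (gammaS N) (sin th ^+ (N - 2) / wallis (N - 2)).
Proof.
move=> th0; have -> : @gammaS R N = sinX_integral (N - 2) * cst (wallis (N - 2))^-1.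
  by apply/funext.
have := is_deriveM (is_derive_sinX_integral (N - 2) th th0)
  (is_derive_cst (wallis (N - 2))^-1 th 1).
by move/is_derive_eq; apply; rewrite scaler0 add0r /= mulrC.
Qed.

End Gamma.

Section CapCosine.
Context {R : realType}.

Lemma cap_cos_itv {RR s r : R} : 0 <= s < RR -> RR - s < r < RR + s ->
  -1 < (r ^+ 2 + (RR ^+ 2 - s ^+ 2)) / (2 * RR * r) < 1.
Proof.
move=> /andP[s0 sR] /andP[r1 r2].
have q0 : 0 < 2 * RR * r by rewrite !mulr_gt0 //; lra.
rewrite ltr_pdivlMr // ltr_pdivrMr // mul1r mulN1r.
have h1 : 0 < s - (r - RR) by lra.
have h2 : 0 < s + (r - RR) by lra.
have := mulr_gt0 h1 h2; rewrite !expr2 => h12.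
by apply/andP; split; nra.
Qed.

Lemma is_derive_cap_cos (c RR r : R) : r != 0 -> RR != 0 ->
  is_derive r (1 : R) (fun z : R => (z ^+ 2 + c) / (2 * RR * z))
    ((r ^+ 2 - c) / (2 * RR * r ^+ 2)).
Proof.
move=> r0 RR0.
have -> : (fun z : R => (z ^+ 2 + c) / (2 * RR * z)) =
    (2 * RR)^-1 *: id + (c / (2 * RR)) *: (fun z : R => z^-1).
  apply/funext => z; rewrite addrfctE !scalrfctE /GRing.scale /=.
  have [->|z0] := eqVneq z 0; first by rewrite !mulr0 !invr0 !mulr0 addr0.
  by field; nonzero.
apply: is_derive_eq; first exact: is_deriveD (is_deriveZ _ _) (is_deriveZ _ (is_deriveV _ _)).
by rewrite /GRing.scale /=; field; nonzero.
Qed.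

End CapCosine.

Section SphereCaps.
Context {R : realType} {N : nat}.
Implicit Types (u v w : 'rV[R]_N) (a : R).

Lemma dotvC u v : dotv u v = dotv v u.
Proof. by apply: eq_bigr => i _; rewrite mulrC. Qed.

Lemma dotvDl u v w : dotv (u + v) w = dotv u w + dotv v w.
Proof. by rewrite /dotv -big_split; apply: eq_bigr => i _; rewrite mxE mulrDl. Qed.

Lemma dotvZl a u w : dotv (a *: u) w = a * dotv u w.
Proof. by rewrite /dotv mulr_sumr; apply: eq_bigr => i _; rewrite mxE mulrA. Qed.

Lemma dotvNl u w : dotv (- u) w = - dotv u w.
Proof. by rewrite /dotv -sumrN; apply: eq_bigr => i _; rewrite mxE mulNr. Qed.

Lemma dotvBl u v w : dotv (u - v) w = dotv u w - dotv v w.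
Proof. by rewrite dotvDl dotvNl. Qed.

Lemma dotvDr u v w : dotv w (u + v) = dotv w u + dotv w v.
Proof. by rewrite dotvC dotvDl !(dotvC w). Qed.

Lemma dotvZr a u w : dotv w (a *: u) = a * dotv w u.
Proof. by rewrite dotvC dotvZl dotvC. Qed.

Lemma dotvBr u v w : dotv w (u - v) = dotv w u - dotv w v.
Proof. by rewrite dotvC dotvBl !(dotvC w). Qed.

Lemma dotvB_sqr u v : dotv (u - v) (u - v) = dotv u u - 2 * dotv u v + dotv v v.
Proof. by rewrite !dotvBl !dotvBr (dotvC v u); ring. Qed.

Lemma dotv_ge0 u : 0 <= dotv u u.
Proof. by apply: sumr_ge0 => i _; rewrite -expr2 sqr_ge0. Qed.

Lemma enorm_sqr u : enorm u ^+ 2 = dotv u u.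
Proof. by rewrite sqr_sqrtr // dotv_ge0. Qed.

Lemma enorm_eq u a : 0 <= a -> dotv u u = a ^+ 2 -> enorm u = a.
Proof. by move=> a0 ua; rewrite /enorm ua sqrtr_sqr ger0_norm. Qed.

Lemma enorm_le u a : 0 <= a -> (enorm u <= a) = (dotv u u <= a ^+ 2).
Proof. by move=> a0; rewrite /enorm -{1}(ger0_norm a0) -sqrtr_sqr ler_sqrt // sqr_ge0. Qed.

Lemma enormZ a u : enorm (a *: u) = `|a| * enorm u.
Proof. by rewrite /enorm dotvZl dotvZr mulrA -expr2 sqrtrM ?sqr_ge0 // sqrtr_sqr. Qed.

Lemma vangleZr a u v : 0 < a -> vangle u (a *: v) = vangle u v.
Proof.
move=> a0; rewrite /vangle enormZ dotvZr gtr0_norm // mulrCA invfM mulrACA.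
by rewrite mulfV ?gt_eqF // mul1r.
Qed.

Lemma dotv_le_enormM u v : 0 < enorm u -> 0 < enorm v ->
  dotv u v <= enorm u * enorm v.
Proof.
move=> u0 v0; set a := enorm u; set b := enorm v.
have E : dotv (b *: u - a *: v) (b *: u - a *: v) = (2 * a * b) * (a * b - dotv u v).
  by rewrite dotvB_sqr !dotvZl !dotvZr -!enorm_sqr -/a -/b; ring.
by have := dotv_ge0 (b *: u - a *: v); rewrite E pmulr_rge0 ?subr_ge0 // !mulr_gt0.
Qed.

Lemma exists_orthogonal v : (2 <= N)%N -> 0 < dotv v v ->
  exists w, dotv w v = 0 /\ 0 < dotv w w.
Proof.
move=> N2 v0.
have [i vi] : exists i, v 0 i != 0.
  case: (pickP (fun i => v 0 i != 0)) => [i hi|h]; first by exists i.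
  suff : dotv v v = 0 by move/eqP; rewrite gt_eqF.
  by apply: big1 => k _; move/negbFE/eqP: (h k) => ->; rewrite mulr0.
have [j ji] : exists j : 'I_N, j != i.
  have N0 : (0 < N)%N by case: N N2.
  have [i0|] := eqVneq i (Ordinal N0); last by exists (Ordinal N0); rewrite eq_sym.
  by exists (Ordinal N2); rewrite i0; apply/eqP => -[].
pose w : 'rV[R]_N := \row_k (if k == i then v 0 j else if k == j then - v 0 i else 0).
have dotw u : dotv w u = v 0 j * u 0 i - v 0 i * u 0 j.
  rewrite /dotv (bigD1 i) //= (bigD1 j) //= big1 ?addr0.
    by rewrite !mxE eqxx (negbTE ji) eqxx mulNr.
  by move=> k /andP[ki kj]; rewrite mxE (negbTE ki) (negbTE kj) mul0r.
exists w; split; first by rewrite dotw mulrC subrr.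
rewrite dotw !mxE eqxx (negbTE ji) eqxx mulrN opprK -!expr2.
by rewrite ltr_wpDl ?sqr_ge0 // lt_def sqrf_eq0 vi sqr_ge0.
Qed.

Lemma exists_dotv v (c d : R) : (2 <= N)%N -> 0 < dotv v v ->
  d ^+ 2 <= c * dotv v v -> exists u, dotv u u = c /\ dotv u v = d.
Proof.
move=> N2 v0 dc; have [w [wv w0]] := exists_orthogonal v N2 v0.
pose a := d / dotv v v; pose b := Num.sqrt ((c - a ^+ 2 * dotv v v) / dotv w w).
have aV : a ^+ 2 * dotv v v <= c.
  have -> : a ^+ 2 * dotv v v = d ^+ 2 / dotv v v by rewrite /a; field; rewrite gt_eqF.
  by rewrite ler_pdivrMr.
have b2 : b ^+ 2 * dotv w w = c - a ^+ 2 * dotv v v.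
  by rewrite sqr_sqrtr ?divfK ?gt_eqF // divr_ge0 ?subr_ge0 // ltW.
exists (a *: v + b *: w); split.
  rewrite !dotvDl !dotvDr !dotvZl !dotvZr (dotvC v w) wv.
  by rewrite -[c](subrK (a ^+ 2 * dotv v v)) -b2; ring.
by rewrite dotvDl !dotvZl wv mulr0 addr0 /a divfK ?gt_eqF.
Qed.

Lemma cap_theta_eq v (RR s r : R) : (2 <= N)%N -> enorm v = RR ->
  0 <= s < RR -> RR - s <= r <= RR + s ->
  cap_theta v s r = acos ((r ^+ 2 + (RR ^+ 2 - s ^+ 2)) / (2 * RR * r)).
Proof.
move=> N2 vR /andP[s0 sR] /andP[r1 r2].
have RR0 : 0 < RR by lra.
have r0 : 0 < r by lra.
have vv : dotv v v = RR ^+ 2 by rewrite -enorm_sqr vR.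
(* c is the value of <y, v> on the rim of the cap *)
set c := (r ^+ 2 + (RR ^+ 2 - s ^+ 2)) / 2.
have -> : (r ^+ 2 + (RR ^+ 2 - s ^+ 2)) / (2 * RR * r) = c / (r * RR).
  by rewrite /c; field; nonzero; rewrite gt_eqF.
have rRR : 0 < r * RR by rewrite mulr_gt0.
have c_le : c <= r * RR.
  have h1 : 0 <= s - (r - RR) by lra.
  have h2 : 0 <= s + (r - RR) by lra.
  by have := mulr_ge0 h1 h2; rewrite /c; nra.
have c_ge : - (r * RR) <= c by rewrite /c; nra.
have angle y : enorm y = r ->
    vangle y ((r / enorm v) *: v) = acos (dotv y v / (r * RR)).
  by move=> yr; rewrite vangleZr ?divr_gt0 ?vR // /vangle yr vR.
pose S := [set vangle y ((r / enorm v) *: v) | y in sphere_cap v s r].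
have rim : S (acos (c / (r * RR))).
  have c2 : c ^+ 2 <= r ^+ 2 * dotv v v by rewrite vv -exprMn; nra.
  have v0 : 0 < dotv v v by rewrite vv exprn_gt0.
  have [y [yy yv]] := exists_dotv v (r ^+ 2) c N2 v0 c2.
  have yr : enorm y = r by apply: enorm_eq => //; exact: ltW.
  exists y; last by rewrite angle // yv.
  split=> //; rewrite enorm_le // dotvB_sqr yy yv vv /c.
  by rewrite le_eqVlt; apply/orP; left; apply/eqP; field.
have ub : ubound S (acos (c / (r * RR))).
  move=> _ [y [yr ys] <-]; rewrite angle //.
  move: ys; rewrite enorm_le // dotvB_sqr -enorm_sqr yr vv => ys.
  apply: le_acos.
  - by rewrite ler_pdivlMr // mulN1r.
  - by apply: ler_wpM2r; [rewrite invr_ge0 ltW | rewrite /c; lra].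
  - by rewrite ler_pdivrMr // mul1r -yr -vR dotv_le_enormM ?yr ?vR.
have S0 : S !=set0 by exists (acos (c / (r * RR))).
have hub : has_ubound S by exists (acos (c / (r * RR))).
by apply/eqP; rewrite eq_le (ge_sup S0 ub) (ub_le_sup hub rim).
Qed.

Section CapTheta.
Context {v : 'rV[R]_N} {RR s : R}.
Hypotheses (N2 : (2 <= N)%N) (vR : enorm v = RR) (s_itv : 0 <= s < RR).

Let RR_gt0 : 0 < RR. Proof. by case/andP: s_itv => s0 sR; lra. Qed.

Let r_gt0 r : RR - s < r < RR + s -> 0 < r.
Proof. by case/andP: s_itv => _ sR /andP[r1 _]; lra. Qed.

Let cap_thetaE r : RR - s < r < RR + s ->
  cap_theta v s r = acos ((r ^+ 2 + (RR ^+ 2 - s ^+ 2)) / (2 * RR * r)).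
Proof. by move=> /andP[r1 r2]; apply: cap_theta_eq => //; rewrite !ltW. Qed.

Lemma cos_cap_theta r : RR - s < r < RR + s ->
  cos (cap_theta v s r) = (r ^+ 2 + (RR ^+ 2 - s ^+ 2)) / (2 * RR * r).
Proof.
move=> r_itv; have /andP[u1 u2] := cap_cos_itv s_itv r_itv.
by rewrite cap_thetaE // acosK // in_itv /= !ltW.
Qed.

Lemma cap_theta_itv r : RR - s < r < RR + s -> 0 < cap_theta v s r < pi.
Proof.
move=> r_itv; have /andP[u1 u2] := cap_cos_itv s_itv r_itv.
by rewrite cap_thetaE // acos_gt0 ?acos_ltpi ?u1 ?u2 ?ltW.
Qed.

Lemma cap_theta_rim r : r = RR - s \/ r = RR + s -> cap_theta v s r = 0.
Proof.
case/andP: s_itv => s0 sR r_rim.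
have r0 : 0 < r by case: r_rim => ->; lra.
rewrite (cap_theta_eq v RR s r N2 vR s_itv); last by case: r_rim => ->; apply/andP; split; lra.
have -> : r ^+ 2 + (RR ^+ 2 - s ^+ 2) = 2 * RR * r by case: r_rim => ->; ring.
by rewrite divff ?acos1 // !mulf_neq0 ?gt_eqF.
Qed.

Lemma is_derive_cap_theta r : RR - s < r < RR + s ->
  is_derive r (1 : R) (cap_theta v s)
    (- (sin (cap_theta v s r))^-1 * ((r ^+ 2 - (RR ^+ 2 - s ^+ 2)) / (2 * RR * r ^+ 2))).
Proof.
move=> r_itv; have u_itv := cap_cos_itv s_itv r_itv.
have := @is_derive1_comp _ acos (fun z => (z ^+ 2 + (RR ^+ 2 - s ^+ 2)) / (2 * RR * z))
  r _ _ (is_derive1_acos u_itv)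
  (is_derive_cap_cos _ _ _ (lt0r_neq0 (r_gt0 r r_itv)) (lt0r_neq0 RR_gt0)).
rewrite cap_thetaE // sin_acos; last by case/andP: u_itv => *; rewrite !ltW.
apply: near_eq_is_derive; have /near_in_itvoo r_near : r \in `](RR - s), (RR + s)[.
  by rewrite in_itv.
by near=> z; rewrite cap_thetaE //; near: z.
Unshelve. all: by end_near.
Qed.

Lemma h_of_gt0 r : RR - s < r < RR + s -> 0 < h_of v s r.
Proof.
move=> r_itv; apply: mulr_gt0; first exact: r_gt0.
exact/gammaS_gt0/cap_theta_itv.
Qed.

Lemma h_of_rim r : r = RR - s \/ r = RR + s -> h_of v s r = 0.
Proof. by move=> r_rim; rewrite /h_of cap_theta_rim // gammaS0 mulr0. Qed.

End CapTheta.
End SphereCaps.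

Section Normalisation.
Context {R : realType}.

Lemma Rad_gt0 N (tau : R) : (0 < N)%N -> 0 < tau -> 0 < Rad N tau.
Proof. by move=> N0 tau0; rewrite sqrtr_gt0 !mulr_gt0 ?ltr0n. Qed.

Lemma sqr_Rad N (tau : R) : 0 <= tau -> Rad N tau ^+ 2 = 2 * N%:R * tau.
Proof. by move=> tau0; rewrite sqr_sqrtr // !mulr_ge0. Qed.

Lemma s_of_x_lt n (beta RR : R) (x : 'rV[R]_n) : 0 < RR -> `|beta| < 1 ->
  s_of_x beta RR x < RR.
Proof.
move=> RR0 beta1; rewrite -[RR in _ < RR]gtr0_norm // -sqrtr_sqr ltr_sqrt ?exprn_gt0 //.
have beta2 : beta ^+ 2 < 1 by rewrite -real_normK ?num_real // expr_lt1.
have := sqr_ge0 (enorm x); have := exprn_gt0 2 RR0; nra.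
Qed.

Lemma abs_sub1_le_sqr (p : R) : 0 <= p -> p ^+ 2 <= 1 -> `|p - 1| <= 1 - p ^+ 2.
Proof.
move=> p0 p1; have p1' : p <= 1 by rewrite -(expr_le1 (n := 2)).
by rewrite ler0_norm ?subr_le0 // opprB; nra.
Qed.

Lemma wallis_const_error k (tau : R) : 0 < tau ->
  `|2 * Num.sqrt (pi * tau) / (Rad k.+3 tau * wallis k.+1) - 1| <= 2 / k.+3%:R.
Proof.
move=> tau0; set p := (X in `|X - 1|).
have W0 := @wallis_gt0 R k.+1.
have N0 : (0 : R) < k.+3%:R by rewrite ltr0n.
have p_sqr : p ^+ 2 * (k.+3%:R * wallis k.+1 ^+ 2) = 2 * pi.
  have pt : 0 <= pi * tau by rewrite mulr_ge0 ?pi_ge0 ?ltW.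
  rewrite /p expr_div_n !exprMn sqr_sqrtr // sqr_Rad ?ltW //.
  by field; nonzero; rewrite gt_eqF.
have W2 : (0 : R) < wallis k.+1 ^+ 2 by rewrite exprn_gt0.
have lb : k.+1%:R <= p ^+ 2 * k.+3%:R.
  by rewrite -(ler_pM2r W2) -mulrA p_sqr wallis_sqr_le.
have ub : p ^+ 2 * k.+3%:R <= k.+2%:R.
  by rewrite -(ler_pM2r W2) -mulrA p_sqr wallis_sqr_ge.
have p1 : p ^+ 2 <= 1.
  by rewrite -(ler_pM2r N0) mul1r (le_trans ub) // ler_nat.
have p0 : 0 <= p by rewrite /p divr_ge0 ?mulr_ge0 ?sqrtr_ge0 ?ltW ?Rad_gt0.
apply: le_trans (abs_sub1_le_sqr _ p0 p1) _.
have k3 : k.+3%:R = k.+1%:R + 2 :> R by rewrite -addn2 natrD.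
rewrite ler_pdivlMr // mulrBl mul1r; move: lb; set P := p ^+ 2 * _.
by rewrite k3; lra.
Qed.

Lemma sqr_powR_half (a : R) k : 0 <= a -> (a ^+ 2) `^ (k%:R / 2) = a ^+ k.
Proof.
move=> a0; rewrite mulrC powRrM powR12_sqrt ?sqr_ge0 // sqrtr_sqr ger0_norm //.
by rewrite powR_mulrn.
Qed.

(* With N = k + 3, this is the closed form of gamma'(theta) theta' in which
   1 + e is the normalised Wallis constant bounded by [wallis_const_error]. *)
Lemma derive_gammaS_cap_theta_eq k (tau r rb th : R) : 0 < tau -> 0 < r ->
  0 < sin th -> cos th = (r ^+ 2 + rb ^+ 2) / (2 * Rad k.+3 tau * r) ->
  sin th ^+ k.+1 / wallis k.+1 *
    (- (sin th)^-1 * ((r ^+ 2 - rb ^+ 2) / (2 * Rad k.+3 tau * r ^+ 2))) =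
  - ((2 * Num.sqrt (pi * tau) / (Rad k.+3 tau * wallis k.+1)) /
       (4 * Num.sqrt (pi * tau) * r ^+ 2)) * (r ^+ 2 - rb ^+ 2)
    * powR (1 - (r ^+ 2 + rb ^+ 2) ^+ 2 / (8 * k.+3%:R * tau * r ^+ 2))
           ((k.+3%:R - 3) / 2).
Proof.
move=> tau0 r0 sin0 cos_th.
have RR0 : 0 < Rad k.+3 tau by rewrite Rad_gt0.
have -> : 1 - (r ^+ 2 + rb ^+ 2) ^+ 2 / (8 * k.+3%:R * tau * r ^+ 2) = sin th ^+ 2.
  rewrite sin2cos2 cos_th expr_div_n !exprMn sqr_Rad ?ltW //; congr (1 - _ / _); ring.
have -> : (k.+3%:R - 3) / 2 = k%:R / 2 :> R by rewrite -addn3 natrD addrK.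
rewrite sqr_powR_half ?ltW // exprS.
have W0 := @wallis_gt0 R k.+1.
have sq0 : 0 < Num.sqrt (pi * tau) by rewrite sqrtr_gt0 mulr_gt0 ?pi_gt0.
by field; nonzero; rewrite gt_eqF.
Qed.

End Normalisation.

Theorem lemma4p4 (R : realType) (n : nat) (tau beta : R) :
  (1 <= n)%N -> 0 < tau -> 0 < beta < 1 ->
  exists C : R, forall (N : nat) (ybar : 'rV[R]_N) (x : 'rV[R]_n),
    (3 <= N)%N -> enorm ybar = Rad N tau -> enorm x <= beta * Rad N tau ->
    let RR := Rad N tau in
    let s := s_of_x beta RR x in
    let rb := Num.sqrt (RR ^+ 2 - s ^+ 2) in
    let th := cap_theta ybar s in
    (forall r : R, RR - s < r < RR + s ->
       cos (th r) = (r ^+ 2 + rb ^+ 2) / (2 * RR * r) /\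
       derivable th r 1 /\
       derive1 th r = - (sin (th r))^-1 * ((r ^+ 2 - rb ^+ 2) / (2 * RR * r ^+ 2))) /\
    (forall r : R, RR - s < r < RR + s -> 0 < h_of ybar s r) /\
    h_of ybar s (RR - s) = 0 /\ h_of ybar s (RR + s) = 0 /\
    (forall r : R, RR - s < r < RR + s ->
       derivable (gammaS N) (th r) 1 /\
       exists e : R, `|e| <= C / N%:R /\
         derive1 (gammaS N) (th r) * derive1 th r =
           - ((1 + e) / (4 * Num.sqrt (pi * tau) * r ^+ 2)) * (r ^+ 2 - rb ^+ 2)
             * powR (1 - (r ^+ 2 + rb ^+ 2) ^+ 2 / (8 * N%:R * tau * r ^+ 2))
                    ((N%:R - 3) / 2)).
Proof.
move=> _ tau0 /andP[beta0 beta1]; exists 2 => N ybar x N3 ybarR _ RR s rb th.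
have [k Nk] : exists k, N = k.+3 by exists (N - 3)%N; rewrite -addn3 subnK.
subst N; have N2 : (2 <= k.+3)%N by [].
have RR0 : 0 < RR by rewrite Rad_gt0.
have s_itv : 0 <= s < RR by rewrite sqrtr_ge0 s_of_x_lt // gtr0_norm.
have rb2 : RR ^+ 2 - s ^+ 2 = rb ^+ 2.
  by rewrite /rb sqr_sqrtr // subr_ge0; case/andP: s_itv => s0 sR; nra.
have d_th := is_derive_cap_theta N2 ybarR s_itv; rewrite rb2 in d_th.
split.
  move=> r r_itv; have [th_ex th_eq] := d_th r r_itv.
  by rewrite /th (cos_cap_theta N2 ybarR s_itv r r_itv) rb2 derive1E th_eq.
split; first exact: h_of_gt0 N2 ybarR s_itv.
split; first exact: h_of_rim N2 ybarR s_itv _ (or_introl erefl).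
split; first exact: h_of_rim N2 ybarR s_itv _ (or_intror erefl).
move=> r r_itv; have /andP[th0 thpi] := cap_theta_itv N2 ybarR s_itv r r_itv.
have [th_ex th_eq] := d_th r r_itv.
have [gamma_ex gamma_eq] := is_derive_gammaS k.+3 _ th0.
split=> //; exists (2 * Num.sqrt (pi * tau) / (RR * wallis k.+1) - 1).
split; first exact: wallis_const_error.
rewrite !derive1E gamma_eq th_eq [1 + _]addrC subrK.
apply: derive_gammaS_cap_theta_eq => //; first by case/andP: r_itv; case/andP: s_itv => *; lra.
  by rewrite sin_gt0_pi // th0.
by rewrite (cos_cap_theta N2 ybarR s_itv r r_itv) rb2.
Qed.
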